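(* Let $k\ge 3$ and let $\sigma$ be a (possibly vincular) pattern of length $k$ whose underlying permutation is $k(k-1)\cdots 1$ (with any choice of underlined entries). Then for every positive integer $n$, \[\mathrm{Sort}_n(\mathrm{SC}_\sigma)=\mathrm{Av}_n(\mathrm{rev}(\sigma),132).\]
   Context: $\mathfrak S_n$ is the set of permutations of $\{1,\dots,n\}$. A vincular pattern is a permutation some of whose entries are underlined; a sequence contains it if it has a subsequence with the same relative order in which entries corresponding to adjacent underlined entries of the pattern occupy consecutive positions of the sequence; otherwise it avoids it. $\mathrm{Av}_n(\dots)$ is the set of permutations in $\mathfrak S_n$ avoiding all listed patterns. $\mathrm{rev}(\sigma)$ is the reverse of $\sigma$, with the underlining reversed accordingly. For a pattern $\sigma$, the $\sigma$-avoiding stack-sorting map $\mathrm{SC}_\sigma$ acts on $\tau$: read entries left to right; when the next entry $x$ is read, if pushing $x$ yields a stack whose entries read top to bottom (adjacency in the stack counting as consecutive positions) avoid $\sigma$, push $x$; otherwise pop the top stack entry to the output and repeat. At the end pop all remaining entries to the output; the output is $\mathrm{SC}_\sigma(\tau)$. West's stack-sorting map is $s=\mathrm{SC}_{21}$. $\mathrm{Sort}_n(\mathrm{SC}_\sigma)=\{\tau\in\mathfrak S_n : s(\mathrm{SC}_\sigma(\tau))=12\cdots n\}$. *)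

From mathcomp Require Import all_boot.
Set Implicit Arguments. Unset Strict Implicit. Unset Printing Implicit Defensive.

(* A (possibly vincular) pattern: its underlying sequence [pperm] (a
   permutation of 1..k) and a bit sequence [pund] of the same length marking
   which entries are underlined. *)
Record pattern := Pattern { pperm : seq nat; pund : seq bool }.

Fixpoint subseqs (s : seq nat) : seq (seq nat) :=
  if s is x :: xs then let r := subseqs xs in map (cons x) r ++ r else [:: [::]].

(* [idx] (strictly increasing positions of [s]) is an occurrence of [p] in [s]:
   same relative order, and entries matching adjacent underlined entries of the
   pattern occupy consecutive positions. *)
Definition occurrence (p : pattern) (s : seq nat) (idx : seq nat) : bool :=
  let k := size (pperm p) in
  [&& size idx == k,
      all (fun a => all (fun b =>
             (nth 0 s (nth 0 idx a) < nth 0 s (nth 0 idx b)) ==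
             (nth 0 (pperm p) a < nth 0 (pperm p) b)) (iota 0 k)) (iota 0 k)
    & all (fun j => (nth false (pund p) j && nth false (pund p) j.+1) ==>
                    (nth 0 idx j.+1 == (nth 0 idx j).+1)) (iota 0 k.-1)].

Definition contains (s : seq nat) (p : pattern) : bool :=
  has (occurrence p s) (subseqs (iota 0 (size s))).

Definition avoids (s : seq nat) (p : pattern) : bool := ~~ contains s p.

Definition avoids_all (s : seq nat) (ps : seq pattern) : bool :=
  all (avoids s) ps.

Definition pat_rev (p : pattern) : pattern := Pattern (rev (pperm p)) (rev (pund p)).

Definition pat21 : pattern := Pattern [:: 2; 1] [:: false; false].
Definition pat132 : pattern := Pattern [:: 1; 3; 2] [:: false; false; false].

(* The stack is a seq whose head is the top of the stack; read top to bottom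
   it is the sequence itself. *)
Fixpoint push_step (sigma : pattern) (x : nat) (st out : seq nat)
  : seq nat * seq nat :=
  if avoids (x :: st) sigma then (x :: st, out) else
  match st with
  | [::] => ([:: x], out)
  | y :: st' => push_step sigma x st' (rcons out y)
  end.

Fixpoint sc_loop (sigma : pattern) (tau st out : seq nat) : seq nat :=
  match tau with
  | [::] => out ++ st
  | x :: tau' => let: (st', out') := push_step sigma x st out in
                 sc_loop sigma tau' st' out'
  end.

Definition SC (sigma : pattern) (tau : seq nat) : seq nat := sc_loop sigma tau [::] [::].

Definition west_s (tau : seq nat) : seq nat := SC pat21 tau.

Definition is_perm (n : nat) (tau : seq nat) : bool := perm_eq tau (iota 1 n).

Definition in_Sort (n : nat) (sigma : pattern) (tau : seq nat) : bool :=
  is_perm n tau && (west_s (SC sigma tau) == iota 1 n).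

Definition in_Av (n : nat) (ps : seq pattern) (tau : seq nat) : bool :=
  is_perm n tau && avoids_all tau ps.

(* For sigma = k...1 the stack of SC_sigma stays sigma-avoiding, and pushing x fails
   exactly when x on top of the current stack contains sigma.  If rev tau avoids sigma
   (i.e. tau avoids rev sigma), no push ever fails and SC_sigma(tau) = rev tau, which
   West's map sorts iff it avoids 231, i.e. iff tau avoids 132.  Otherwise, at the
   first failing push let y be the last entry popped: x y rest contains sigma while
   y rest and x rest avoid it, so an occurrence uses x and y and, as k >= 3, some b of
   rest with b < y < x.  The output then shows y, x, b in this order, and West's map
   never sorts such a 231 pattern: its first entry leaves the stack when the larger
   second one arrives, before the smaller third one is read. *)

From mathcomp Require Import all_boot zify.
Set Implicit Arguments. Unset Strict Implicit. Unset Printing Implicit Defensive.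

Lemma all_iota0P k (P : pred nat) : reflect (forall a, a < k -> P a) (all P (iota 0 k)).
Proof.
apply: (iffP allP) => H a.
  by move=> ak; apply: H; rewrite mem_iota.
by rewrite mem_iota => /andP[_]; apply: H.
Qed.

Lemma mem_subseqs (s t : seq nat) : (t \in subseqs s) = subseq t s.
Proof.
elim: s t => [|x s IH] [|y t] //=; rewrite mem_cat IH ?sub0seq ?orbT //.
have [->|ne] := eqVneq y x.
  rewrite mem_map; last by move=> ? ? [].
  by rewrite IH orb_idr //; apply/subseq_trans/subseq_cons.
by case: mapP => // -[t' _ [yx _]]; rewrite yx eqxx in ne.
Qed.

Lemma subseq_iotaE idx n : subseq idx (iota 0 n) = sorted ltn idx && all (gtn n) idx.
Proof.
apply/idP/andP => [sub | [so bd]].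
  split; first exact: (subseq_sorted ltn_trans sub (iota_ltn_sorted 0 n)).
  by apply/allP => i /(mem_subseq sub); rewrite mem_iota.
apply/subseq_uniqP; first exact: iota_uniq.
apply: (irr_sorted_eq ltn_trans ltnn) => //.
  exact/sorted_filter/iota_ltn_sorted/ltn_trans.
by move=> i; rewrite mem_filter mem_iota /=; case: (boolP (i \in idx)) => // /(allP bd).
Qed.

Lemma occurrenceP p s idx (k := size (pperm p)) :
  reflect [/\ size idx = k,
     forall a b, a < k -> b < k ->
       (nth 0 s (nth 0 idx a) < nth 0 s (nth 0 idx b)) =
       (nth 0 (pperm p) a < nth 0 (pperm p) b)
   & forall j, j.+1 < k -> nth false (pund p) j -> nth false (pund p) j.+1 ->
       nth 0 idx j.+1 = (nth 0 idx j).+1]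
    (occurrence p s idx).
Proof.
apply: (iffP and3P) => [[/eqP sz /all_iota0P ord /all_iota0P adj] | [sz ord adj]].
  split=> // [a b ak bk | j jk u1 u2].
    by move/all_iota0P: (ord a ak) => /(_ b bk) /eqP.
  by apply/eqP; move/implyP: (adj j ltac:(lia)); apply; rewrite u1.
split; first exact/eqP.
  by apply/all_iota0P => a ak; apply/all_iota0P => b bk; rewrite ord.
apply/all_iota0P => j jk; apply/implyP => /andP[u1 u2]; rewrite adj //; lia.
Qed.

Lemma containsP s p :
  reflect (exists2 idx, subseq idx (iota 0 (size s)) & occurrence p s idx) (contains s p).
Proof.
by apply: (iffP hasP) => -[idx sub oc]; exists idx; rewrite ?mem_subseqs in sub *.
Qed.

Lemma contains_size s p : contains s p -> size (pperm p) <= size s.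
Proof.
case/containsP => idx /size_subseq; rewrite size_iota => le /occurrenceP[<- _ _] //.
Qed.

Lemma avoids_small s p : size s < size (pperm p) -> avoids s p.
Proof. by move=> small; apply: contraL small => /contains_size; rewrite leqNgt. Qed.

Lemma contains_embed p s s' idx (f : nat -> nat) :
  subseq idx (iota 0 (size s)) -> occurrence p s idx ->
  {in idx &, {homo f : i j / i < j}} ->
  {in idx, forall i, f i < size s'} ->
  {in idx, forall i, nth 0 s' (f i) = nth 0 s i} ->
  {in idx, forall i, i.+1 \in idx -> f i.+1 = (f i).+1} ->
  contains s' p.
Proof.
rewrite subseq_iotaE => /andP[so _] /occurrenceP[sz ord adj] mono bd val cons.
have nth_in a : a < size (pperm p) -> nth 0 idx a \in idx by rewrite -sz; apply: mem_nth.
apply/containsP; exists (map f idx).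
  rewrite subseq_iotaE (homo_sorted_in mono) ?(introT allP (fun x h => h)) //=.
  by apply/allP => _ /mapP[i /bd ? ->].
apply/occurrenceP; split=> [|a b ak bk|j jk u1 u2]; first by rewrite size_map.
  by rewrite -!sz in ak bk *; rewrite !(nth_map 0) // !val ?mem_nth // ord -?sz.
have j1 : j.+1 < size idx by rewrite sz.
have j0 : j < size idx := ltnW j1.
rewrite !(nth_map 0) // adj // cons // ?nth_in -?sz //.
by rewrite -adj // nth_in.
Qed.

Lemma contains_catl s t p : contains s p -> contains (t ++ s) p.
Proof.
case/containsP => idx sub oc; apply: (contains_embed (f := addn (size t)) sub oc).
- by move=> i j _ _; rewrite ltn_add2l.
- by move=> i /(mem_subseq sub); rewrite mem_iota size_cat; lia.
- by move=> i _; rewrite nth_cat ltnNge leq_addr addKn.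
- by move=> i _ _; rewrite addnS.
Qed.

Lemma avoids_catl s t p : avoids (t ++ s) p -> avoids s p.
Proof. exact/contraNN/contains_catl. Qed.

Lemma contains_delete_unused p s idx j :
  subseq idx (iota 0 (size s)) -> occurrence p s idx -> j \notin idx -> j < size s ->
  contains (take j s ++ drop j.+1 s) p.
Proof.
move=> sub oc jn js; have ne i : i \in idx -> i != j by apply: contraTneq => ->.
have bd i : i \in idx -> i < size s by move/(mem_subseq sub); rewrite mem_iota.
have sz_take : size (take j s) = j by rewrite size_takel // ltnW.
apply: (contains_embed (f := fun i => if i < j then i else i.-1) sub oc).
- move=> i i' /ne/eqP ? /ne/eqP ? /=; case: (ltnP i j); case: (ltnP i' j); lia.
- move=> i /[dup] /bd ? /ne/eqP ?; rewrite size_cat sz_take size_drop.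
  case: (ltnP i j); lia.
- move=> i /[dup] /bd ? /ne/eqP ? /=; rewrite nth_cat sz_take.
  case: (ltnP i j) => ij; first by rewrite ij nth_take.
  rewrite ifN ?nth_drop; last lia.
  by congr nth; lia.
- move=> i /ne/eqP ? /ne/eqP ? /=; case: (ltnP i j); case: (ltnP i.+1 j); lia.
Qed.

Lemma contains_rev s p : size (pund p) = size (pperm p) ->
  contains s p -> contains (rev s) (pat_rev p).
Proof.
move=> szu /containsP[idx]; set n := size s; set k := size (pperm p).
rewrite subseq_iotaE => /andP[so idx_n] /occurrenceP[sz ord adj].
have /allP bd := idx_n; pose f i := n.-1 - i.
have nth_idx a : a < k -> nth 0 (rev (map f idx)) a = f (nth 0 idx (k - a.+1)).
  by move=> ak; rewrite nth_rev size_map sz // (nth_map 0) // sz; lia.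
have nth_s i : i \in idx -> nth 0 (rev s) (f i) = nth 0 s i.
  by move/bd => /= lt; rewrite nth_rev -/n; [congr nth|]; rewrite /f; lia.
have bd_idx a : a < k -> nth 0 idx a < n by move=> ak; apply/bd/mem_nth; rewrite sz.
apply/containsP; exists (rev (map f idx)).
  rewrite subseq_iotaE rev_sorted all_rev size_rev -/n; apply/andP; split.
    by apply: (homo_sorted_in (P := gtn n)) so => // x y; rewrite !inE /f /=; lia.
  by apply/allP => _ /mapP[i /bd /= ? ->]; rewrite /f; lia.
apply/occurrenceP; split=> [|a b|j]; rewrite /= size_rev -/k.
- by rewrite size_rev size_map sz.
- move=> ak bk; rewrite !nth_idx // !nth_s ?mem_nth ?sz 1?ord; try lia.
  by rewrite !nth_rev -/k.
- move=> jk; rewrite !nth_rev ?szu ?size_map ?sz -/k; try lia.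
  have -> : k - j.+1 = (k - j.+2).+1 by lia.
  move=> u2 u1; have := adj _ _ u1 u2; rewrite -/k => /(_ ltac:(lia)) adj_j.
  have := bd_idx (k - j.+2).+1 ltac:(lia).
  by rewrite !(nth_map 0) ?sz /f ?adj_j; lia.
Qed.

Lemma contains_revE s p : size (pund p) = size (pperm p) ->
  contains (rev s) p = contains s (pat_rev p).
Proof.
move=> szu; apply/idP/idP => [/(contains_rev szu) | ]; first by rewrite revK.
have szu' : size (pund (pat_rev p)) = size (pperm (pat_rev p)) by rewrite /= !size_rev.
by move/(contains_rev szu'); case: p szu {szu'} => ? ? _; rewrite /pat_rev /= !revK.
Qed.

Lemma occurrence_classical p s idx : (forall j, ~~ nth false (pund p) j) ->
  occurrence p s idx = occurrence p (map (nth 0 s) idx) (iota 0 (size idx)).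
Proof.
move=> no_und; apply/occurrenceP/occurrenceP => -[sz ord _].
  split=> [|a b ak bk|j _]; rewrite ?size_iota ?(negPf (no_und _)) //.
  by rewrite !nth_iota ?sz // !add0n !(nth_map 0) ?sz // ord.
rewrite size_iota in sz; split=> [//|a b ak bk|j _]; rewrite ?(negPf (no_und _)) //.
by rewrite -ord // !nth_iota ?sz // !add0n !(nth_map 0) ?sz.
Qed.

Lemma contains_classicalP s p : (forall j, ~~ nth false (pund p) j) ->
  reflect (exists2 t, subseq t s & occurrence p t (iota 0 (size t))) (contains s p).
Proof.
move=> no_und; have map_nth_iota : map (nth 0 s) (iota 0 (size s)) = s.
  by have := mkseq_nth 0 s; rewrite /mkseq.
apply: (iffP (containsP s p)) => [[idx sub oc] | [_ /subseqP[m sz ->] oc]].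
  exists (map (nth 0 s) idx); last by rewrite size_map -occurrence_classical.
  by rewrite -{2}map_nth_iota map_subseq.
exists (mask m (iota 0 (size s))); first exact: mask_subseq.
rewrite (occurrence_classical _ _ no_und) map_mask map_nth_iota.
by rewrite !size_mask ?size_iota in oc *.
Qed.

Lemma contains21P s : reflect (exists a b, b < a /\ subseq [:: a; b] s) (contains s pat21).
Proof.
have no_und j : ~~ nth false (pund pat21) j by case: j => [|[|j]] //=; rewrite nth_nil.
apply: (iffP (contains_classicalP s no_und)) => [[t sub]|[a [b [ba sub]]]].
  case: t sub => [|a [|b [|? ?]]] // sub.
  by rewrite /occurrence /= => /andP[/and3P[_ /and3P[/eqP ba _ _] _] _]; exists a, b.
exists [:: a; b] => //.
by rewrite /occurrence /= !ltnn ba /= ltnNge ltnW.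
Qed.

Lemma avoids21E s : avoids s pat21 = sorted leq s.
Proof.
rewrite (sorted_pairwise leq_trans); apply/idP/idP => [|sorted_s].
  elim: s => //= x s IH avoids_xs; apply/andP; split; last first.
    by apply/IH; apply: contraNN avoids_xs; exact: (contains_catl [:: x]).
  apply/allP => y ys; rewrite leqNgt; apply: contraNN avoids_xs => yx.
  by apply/contains21P; exists x, y; rewrite /= eqxx sub1seq.
apply/contains21P => -[a [b [ba /subseq_pairwise /(_ sorted_s)]]].
by rewrite /= andbT leqNgt ba.
Qed.

Lemma contains21E s : contains s pat21 = ~~ sorted leq s.
Proof. by rewrite -avoids21E negbK. Qed.

Definition has231 (s : seq nat) := exists a b c, a < b < c /\ subseq [:: b; c; a] s.

Lemma contains132E s : contains s pat132 <-> has231 (rev s).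
Proof.
have no_und j : ~~ nth false (pund pat132) j by case: j => [|[|[|j]]] //=; rewrite nth_nil.
split.
  case/(contains_classicalP s no_und) => -[|a [|c [|b [|? ?]]]] // sub.
  rewrite /occurrence /=.
  case/andP => /and4P[/and4P[_ _ /eqP ab _] _ /and4P[_ /eqP bc _ _] _] _.
  by exists a, b, c; rewrite ab bc -(subseq_rev [:: b; c; a]) revK.
case=> a [b [c [/andP[ab bc] sub]]]; apply/(contains_classicalP s no_und).
exists [:: a; c; b]; first by rewrite -(subseq_rev [:: a; c; b]).
have ac := ltn_trans ab bc.
have gtF x y : x < y -> (y < x) = false by move=> xy; rewrite ltnNge ltnW.
by rewrite /occurrence /= !ltnn ab bc ac (gtF _ _ ab) (gtF _ _ bc) (gtF _ _ ac).
Qed.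

Lemma push_step_avoids sg x st out :
  avoids (x :: st) sg -> push_step sg x st out = (x :: st, out).
Proof. by case: st => [|y st] /= ->. Qed.

Lemma sc_loop_avoids sg tau st out :
  avoids (rev tau ++ st) sg -> sc_loop sg tau st out = out ++ rev tau ++ st.
Proof.
elim: tau st => [|x tau IH] st /=; first by [].
rewrite rev_cons cat_rcons => avoids_tau; rewrite push_step_avoids ?IH //.
exact: avoids_catl avoids_tau.
Qed.

Section StackPops.

Variable sg : pattern.
Hypothesis sg_long : 1 < size (pperm sg).

Lemma push_step_pop x st out : contains (x :: st) sg ->
  exists popped y rest, [/\ st = popped ++ y :: rest,
    push_step sg x st out = (x :: rest, out ++ rcons popped y),
    contains (x :: y :: rest) sg & avoids (x :: rest) sg].
Proof.
elim: st out => [|y st IH] out; first by move/negP: (@avoids_small [:: x] sg sg_long).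
move=> contains_xyst /=; rewrite /avoids contains_xyst /=.
case: (boolP (avoids (x :: st) sg)) => [avoids_xst | /negPn /(IH (rcons out y))].
  by exists [::], y, st; rewrite push_step_avoids // cats1.
move=> [popped [y' [rest [-> push_eq ? ?]]]].
by exists (y :: popped), y', rest; rewrite push_eq cat_rcons.
Qed.

Lemma push_stepE x st out : exists popped rest, [/\ st = popped ++ rest,
  push_step sg x st out = (x :: rest, out ++ popped) & avoids (x :: rest) sg].
Proof.
case: (boolP (avoids (x :: st) sg)) => [avoids_xst | /negPn /(push_step_pop out)].
  by exists [::], st; rewrite push_step_avoids // cats0.
move=> [popped [y [rest [-> -> _ ?]]]].
by exists (rcons popped y), rest; rewrite cat_rcons.
Qed.

Lemma sc_loopE tau st out : exists r,
  [/\ sc_loop sg tau st out = out ++ r, subseq st r & perm_eq r (st ++ tau)].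
Proof.
elim: tau st out => [|x tau IH] st out /=; first by exists st; rewrite cats0.
have [popped [rest [-> -> _]]] := push_stepE x st out.
have [r [-> sub_r perm_r]] := IH (x :: rest) (out ++ popped).
exists (popped ++ r); split; first by rewrite catA.
  by rewrite subseq_cat2l (subseq_trans (subseq_cons rest x)).
rewrite -catA perm_cat2l (perm_trans perm_r) //.
by rewrite -cat_rcons perm_cat2r perm_sym perm_rcons.
Qed.

Lemma sc_loop_out_before b a tau st out : b \in out -> a \in tau ->
  subseq [:: b; a] (sc_loop sg tau st out).
Proof.
move=> b_out a_tau; have [r [-> _ perm_r]] := sc_loopE tau st out.
rewrite -cat1s; apply: cat_subseq; rewrite sub1seq // (perm_mem perm_r).
by rewrite mem_cat a_tau orbT.
Qed.

Lemma sc_loop_cat u w st out : exists st' out',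
  sc_loop sg (u ++ w) st out = sc_loop sg w st' out' /\
  perm_eq (st' ++ out') (u ++ st ++ out).
Proof.
elim: u st out => [|x u IH] st out /=; first by exists st, out.
have [popped [rest [-> -> _]]] := push_stepE x st out.
have [st' [out' [-> perm']]] := IH (x :: rest) (out ++ popped).
exists st', out'; split=> //; apply: (perm_trans perm').
by apply/permP => q; rewrite /= !count_cat /= !count_cat; lia.
Qed.

Lemma perm_SC tau : perm_eq (SC sg tau) tau.
Proof. by have [r [+ _]] := sc_loopE tau [::] [::]; rewrite /SC => ->. Qed.

End StackPops.

Definition decr_pattern k und := Pattern (rev (iota 1 k)) und.

Lemma size_decr_pattern k und : size (pperm (decr_pattern k und)) = k.
Proof. by rewrite /= size_rev size_iota. Qed.

Lemma occurrence_decr k und s idx a b : occurrence (decr_pattern k und) s idx ->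
  a < b < k -> nth 0 s (nth 0 idx b) < nth 0 s (nth 0 idx a).
Proof.
case/occurrenceP; rewrite /= size_rev size_iota => _ ord _ /andP[ab bk].
rewrite ord ?(ltn_trans ab) // !nth_rev ?size_iota ?(ltn_trans ab) // !nth_iota; lia.
Qed.

Lemma decr_pattern_pop k und x y rest (sg := decr_pattern k und) : 2 < k ->
  avoids (y :: rest) sg -> avoids (x :: rest) sg -> contains (x :: y :: rest) sg ->
  exists2 b, b \in rest & b < y < x.
Proof.
move=> k3 avoids_y avoids_x /containsP[idx sub oc].
(* An occurrence avoiding position 0 (resp. 1) would survive the deletion of x (resp. y). *)
have used j : j < 2 -> j \in idx.
  move=> j2; apply: contraT => unused.
  have js : j < size (x :: y :: rest) by rewrite /=; lia.
  have := contains_delete_unused sub oc unused js.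
  case: j j2 {unused js} => [|[|]] //= _ contains_rem.
    by move: avoids_y; rewrite /avoids contains_rem.
  by move: avoids_x; rewrite drop0 in contains_rem; rewrite /avoids contains_rem.
have szk : size idx = k by case/occurrenceP: oc; rewrite /= size_rev size_iota.
have lt_decr a b := occurrence_decr (a := a) (b := b) oc.
move: sub; rewrite subseq_iotaE => /andP[so /allP bd].
case: idx szk so bd oc used lt_decr => [|i0 [|i1 [|i2 t]]] /= szk; try lia.
move=> /and3P[i01 i12 /(order_path_min ltn_trans) /allP t_gt] bd _ used lt_decr.
have [? ?] : i0 = 0 /\ i1 = 1.
  move: (used 0 isT) (used 1 isT); rewrite !inE.
  by case/or4P=> [| | |/t_gt] /eqP ?; case/or4P=> [| | |/t_gt] /eqP ?; lia.
subst i0 i1; have [j ?] : exists j, i2 = j.+2 by exists (i2 - 2); lia.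
subst i2; exists (nth 0 rest j).
  by apply: mem_nth; have := bd j.+2; rewrite !inE eqxx orbT; apply.
by rewrite (lt_decr 1 2) ?(lt_decr 0 1); lia.
Qed.

Lemma sc_loop_decr_has231 k und tau st out (sg := decr_pattern k und) : 2 < k ->
  avoids st sg -> contains (rev tau ++ st) sg -> has231 (sc_loop sg tau st out).
Proof.
move=> k3; have sg_long : 1 < size (pperm sg) by rewrite size_decr_pattern; lia.
elim: tau st out => [|x tau IH] st out avoids_st /=; first by move/negP: avoids_st.
rewrite rev_cons cat_rcons => contains_tau.
case: (boolP (avoids (x :: st) sg)) => [avoids_xst | /negPn contains_xst].
  by rewrite push_step_avoids //; apply: IH.
have [popped [y [rest [st_eq -> contains_xy avoids_xrest]]]] :=
  push_step_pop sg_long out contains_xst.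
have avoids_yrest : avoids (y :: rest) sg.
  by apply: (avoids_catl (t := popped)); rewrite -st_eq.
have [b b_rest /andP[b_y y_x]] := decr_pattern_pop k3 avoids_yrest avoids_xrest contains_xy.
have [r [-> sub_r _]] := sc_loopE sg_long tau (x :: rest) (out ++ rcons popped y).
exists b, y, x; split; first by rewrite b_y y_x.
rewrite -cat1s; apply: cat_subseq.
  by rewrite sub1seq mem_cat mem_rcons inE eqxx orbT.
by apply: subseq_trans sub_r; rewrite /= eqxx sub1seq.
Qed.

Lemma subseq_cons_cat (T : eqType) (x : T) s t :
  subseq (x :: s) t -> exists u v, t = u ++ x :: v /\ subseq s v.
Proof.
elim: t => [|y t IH] //=; have [->|_] := eqVneq x y; first by exists [::], t.
by move/IH => [u [v [-> sub]]]; exists (y :: u), v.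
Qed.

Lemma sorted_cat_insert l1 x l2 : sorted leq (l1 ++ l2) ->
  all (geq x) l1 -> all (leq x) l2 -> sorted leq (l1 ++ x :: l2).
Proof.
rewrite !(sorted_pairwise leq_trans) !pairwise_cat pairwise_cons allrel_consr.
by move=> /and3P[-> -> ->] -> ->.
Qed.

Lemma pat21_long : 1 < size (pperm pat21). Proof. by []. Qed.

Lemma push_step21 x st out : sorted leq st -> exists popped rest,
  [/\ st = popped ++ rest, push_step pat21 x st out = (x :: rest, out ++ popped),
      all (gtn x) popped & sorted leq (x :: rest)].
Proof.
move=> sorted_st; case: (boolP (avoids (x :: st) pat21)) => [|/negPn contains_xst].
  by exists [::], st; rewrite push_step_avoids // cats0 -avoids21E.
have [popped [y [rest [st_eq -> contains_xy avoids_xrest]]]] :=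
  push_step_pop pat21_long out contains_xst.
exists (rcons popped y), rest; rewrite cat_rcons -avoids21E; split=> //.
move: sorted_st contains_xy; rewrite st_eq contains21E => sorted_st.
have /= -> : sorted leq (y :: rest) by case: (cat_sorted2 sorted_st).
rewrite andbT -ltnNge => y_x; rewrite all_rcons /= y_x /=.
move: sorted_st; rewrite (sorted_pairwise leq_trans) pairwise_cat allrel_consr.
case/and3P => /andP[/allP popped_y _] _ _.
by apply/allP => z /popped_y /leq_ltn_trans; apply.
Qed.

Lemma sorted_sc_loop21 w h st out : ~ has231 (h ++ w) -> {subset st <= h} ->
  sorted leq (out ++ st) -> {in out & w, forall y z, y <= z} ->
  sorted leq (sc_loop pat21 w st out).
Proof.
elim: w h st out => [|x w IH] h st out no231 st_h sorted_out_st out_w //=.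
have [popped [rest [st_eq -> popped_x sorted_xrest]]] :=
  push_step21 x out (cat_sorted2 sorted_out_st).2.
have popped_h : {subset popped <= h}.
  by move=> y y_popped; rewrite st_h // st_eq mem_cat y_popped.
apply: (IH (rcons h x)); first by rewrite cat_rcons.
- move=> z; rewrite inE mem_rcons inE => /orP[-> // | z_rest].
  by rewrite st_h ?orbT // st_eq mem_cat z_rest orbT.
- apply: sorted_cat_insert; first by rewrite -catA -st_eq.
    rewrite all_cat; apply/andP; split; last by apply/allP => y /(allP popped_x) /ltnW.
    by apply/allP => y y_out; apply: out_w; rewrite ?inE ?eqxx.
  by move: sorted_xrest; rewrite /= (path_sortedE leq_trans) => /andP[].
move=> y z; rewrite mem_cat => /orP[y_out z_w | y_popped z_w].
  by apply: out_w; rewrite // inE z_w orbT.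
(* An entry y popped by x and a later z < y would form the 231 pattern y x z. *)
rewrite leqNgt; apply/negP => z_y; apply: no231; exists z, y, x.
have y_x : y < x := allP popped_x y y_popped.
rewrite z_y y_x; split=> //.
rewrite -cat1s; apply: cat_subseq; first by rewrite sub1seq popped_h.
by rewrite /= eqxx sub1seq.
Qed.

Lemma sc_loop21_inversion b c a v st out : b < c -> a \in v -> b \in st ++ out ->
  subseq [:: b; a] (sc_loop pat21 (c :: v) st out).
Proof.
move=> b_c a_v b_in /=.
have [popped [rest [st_eq -> avoids_crest]]] := push_stepE pat21_long c st out.
apply: (sc_loop_out_before pat21_long _ _ a_v).
have b_rest : b \notin rest.
  apply: contraTN b_c => b_rest; rewrite -leqNgt.
  by move: avoids_crest; rewrite avoids21E /= (path_sortedE leq_trans) => /andP[/allP->].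
move: b_in b_rest; rewrite st_eq !mem_cat.
by case: (b \in rest) => //=; rewrite orbF orbC.
Qed.

Lemma west_s_inversion a b c pi : a < b < c -> subseq [:: b; c; a] pi ->
  subseq [:: b; a] (west_s pi).
Proof.
case/andP=> a_b b_c /subseq_cons_cat[u [v [-> /subseq_cons_cat[u' [v' [-> a_v']]]]]].
rewrite /west_s /SC (_ : _ ++ _ = (u ++ b :: u') ++ c :: v'); last by rewrite -catA.
have [st' [out' [-> perm']]] := sc_loop_cat pat21_long (u ++ b :: u') (c :: v') [::] [::].
apply: sc_loop21_inversion; rewrite ?(perm_mem perm') ?mem_cat ?inE ?eqxx ?orbT //.
by rewrite -sub1seq.
Qed.

Lemma west_s_sortedP pi : sorted leq (west_s pi) <-> ~ has231 pi.
Proof.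
split=> [sorted_w [a [b [c [abc sub]]]] | no231].
  have := subseq_sorted leq_trans (west_s_inversion abc sub) sorted_w.
  by case/andP: abc => a_b _; rewrite /= andbT leqNgt a_b.
exact: (sorted_sc_loop21 (h := [::])).
Qed.

Lemma west_s_iotaE pi n : perm_eq pi (iota 1 n) ->
  (west_s pi == iota 1 n) = sorted leq (west_s pi).
Proof.
move=> perm_pi; apply/eqP/idP => [-> | sorted_w]; first exact: iota_sorted.
apply: (sorted_eq leq_trans anti_leq sorted_w (iota_sorted 1 n)).
exact: perm_trans (perm_SC pat21_long _) perm_pi.
Qed.

Unset Implicit Arguments.

Theorem mainTheorem4 (k : nat) (und : seq bool) :
  3 <= k -> size und = k ->
  let sigma := Pattern (rev (iota 1 k)) und in
  forall n : nat, 0 < n ->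
  forall tau : seq nat,
    in_Sort n sigma tau = in_Av n [:: pat_rev sigma; pat132] tau.
Proof.
move=> k3 und_k sg n _ tau.
have szu : size (pund sg) = size (pperm sg) by rewrite /= size_rev size_iota.
rewrite /in_Sort /in_Av /avoids_all /= andbT; case: (boolP (is_perm n tau)) => //= perm_tau.
case: (boolP (avoids tau (pat_rev sg))) => [avoids_tau | contains_tau] /=.
  rewrite /SC sc_loop_avoids; last by rewrite cats0 /avoids contains_revE.
  rewrite cats0 west_s_iotaE ?perm_rev //.
  apply/idP/negP => [/west_s_sortedP no231 /contains132E // | no132].
  by apply/west_s_sortedP => /(contains132E tau).2.
have sg_long : 1 < size (pperm sg) by rewrite size_decr_pattern; lia.
apply/negbTE; rewrite west_s_iotaE ?(perm_trans (perm_SC sg_long _) perm_tau) //.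
apply/negP => /west_s_sortedP; apply; apply: sc_loop_decr_has231 => //.
  by apply: avoids_small; rewrite size_decr_pattern /=; lia.
by rewrite cats0 contains_revE //; apply/negPn.
Qed.
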